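(* Let $n\ge 2$ and let $S$ be an admissible peak set in $S^B_n$. Then $\max\{d_H(\sigma,\rho) : \sigma,\rho\in P^B(S;n)\}=n$.
   Context: $S^B_n$ is the set of bijections $\sigma$ of $\{-n,\dots,-1,1,\dots,n\}$ with $\sigma(-i)=-\sigma(i)$ for all $i$; a signed permutation is written in one-line notation $\sigma(1)\cdots\sigma(n)$. A signed permutation $\sigma$ has a peak at index $i\in\{2,\dots,n-1\}$ if $\sigma(i-1)<\sigma(i)>\sigma(i+1)$ (usual order on integers). $Peak(\sigma)$ is the set of indices where $\sigma$ has a peak, and for $S\subseteq[n]$, $P^B(S;n)=\{\sigma\in S^B_n : Peak(\sigma)=S\}$. $S$ is an admissible peak set if $P^B(S;n)\neq\emptyset$ (equivalently, $S\subseteq\{2,\dots,n-1\}$ and $S$ contains no two consecutive integers). The Hamming metric is $d_H(\sigma,\rho)=|\{i\in[n] : \sigma(i)\neq\rho(i)\}|$. *)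

From mathcomp Require Import all_boot all_order all_algebra all_fingroup.
Set Implicit Arguments. Unset Strict Implicit. Unset Printing Implicit Defensive.
Import Order.TTheory GRing.Theory Num.Theory.

(* Signed permutations of [n] (hyperoctahedral group S^B_n), encoded as a pair
   (p, s) of a permutation p of 'I_n and a sign vector s.  The one-line
   notation is sigma(i) = (-1)^{s(i-1)} * (p(i-1) + 1) for i in [n];
   this is the standard bijection with the bijections sigma of
   {-n..-1,1..n} satisfying sigma(-i) = -sigma(i). *)
Definition signed_perm (n : nat) : finType := ({perm 'I_n} * {ffun 'I_n -> bool})%type.

Definition sval n (sg : signed_perm n) (i : 'I_n) : int :=
  if sg.2 i then (- Posz (sg.1 i).+1)%R else Posz (sg.1 i).+1.

(* one-line value sigma(k) for a 1-based index k (0 outside [n], never used) *)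
Definition sval_nat n (sg : signed_perm n) (k : nat) : int :=
  match insub k.-1 with
  | Some i => if k == 0 then 0%R else sval sg i
  | None => 0%R
  end.

Definition is_peak n (sg : signed_perm n) (k : nat) : bool :=
  [&& 2 <= k, k <= n.-1,
      (sval_nat sg k.-1 < sval_nat sg k)%R & (sval_nat sg k.+1 < sval_nat sg k)%R].

Definition Peak n (sg : signed_perm n) : {set 'I_n.+1} :=
  [set k : 'I_n.+1 | is_peak sg k].

Definition PB n (S : {set 'I_n.+1}) : {set signed_perm n} :=
  [set sg | Peak sg == S].

Definition admissible n (S : {set 'I_n.+1}) : bool := PB S != set0.

Definition dH n (sg rh : signed_perm n) : nat :=
  #|[set i : 'I_n | sval sg i != sval rh i]|.

From Pilot Require Import Defs.
From mathcomp Require Import all_boot all_order all_algebra all_fingroup.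
From mathcomp Require Import zify.
Set Implicit Arguments. Unset Strict Implicit. Unset Printing Implicit Defensive.
Import Order.TTheory GRing.Theory Num.Theory.

(* Peaks only depend on the relative order of the entries, so replacing the
   values of sigma by 1..n (standardization) or by -n..-1 in the same relative
   order keeps the peak set.  A positive entry v can only be a fixed point of
   the first replacement if all of v+1..n occur positively, in particular +n;
   symmetrically a fixed point of the second one forces -n to occur.  Exactly
   one of +n, -n occurs, so one of the two replacements differs from sigma in
   every position. *)

Lemma card_le_range (T : finType) (A : {pred T}) (h : T -> nat) a b :
  {in A &, injective h} -> {in A, forall x, a <= h x < b} -> #|A| <= b - a.
Proof.
move=> h_inj h_range.
have uniq_hA : uniq (map h (enum A)).
  by rewrite map_inj_in_uniq ?enum_uniq // => x y; rewrite !mem_enum; apply: h_inj.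
have sub_hA : {subset map h (enum A) <= iota a (b - a)}.
  move=> y /mapP[x]; rewrite mem_enum => /h_range xr ->; rewrite mem_iota; move: xr; lia.
by rewrite cardE -(size_map h) -(size_iota a (b - a)) uniq_leq_size.
Qed.

Section Rank.
Variables (d : Order.disp_t) (X : orderType d) (T : finType) (f : T -> X).

Definition rank (i : T) : nat := #|[set j | (f j < f i)%O]|.

Lemma rank_lt_card i : rank i < #|T|.
Proof.
have sub : [set j | (f j < f i)%O] \subset [set~ i].
  by apply/subsetP => j; rewrite !inE; apply: contraTneq => ->; rewrite ltxx.
rewrite (leq_ltn_trans (subset_leq_card sub)) // cardsC1 ltn_predL.
by apply/card_gt0P; exists i.
Qed.

Lemma rank_complement i : rank i = #|T| - #|[set j | (f i <= f j)%O]|.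
Proof.
have -> : [set j | (f i <= f j)%O] = ~: [set j | (f j < f i)%O].
  by apply/setP => j; rewrite !inE leNgt.
by rewrite -(cardsC [set j | (f j < f i)%O]) addnK.
Qed.

Hypothesis f_inj : injective f.

Lemma ltn_rank i j : (rank i < rank j) = (f i < f j)%O.
Proof.
have rank_mono k l : (f k < f l)%O -> rank k < rank l.
  move=> lt_kl; apply: proper_card; apply/properP; split.
    by apply/subsetP => m; rewrite !inE => /lt_trans; apply.
  by exists k; rewrite !inE ?ltxx.
case: (ltgtP (f i) (f j)) => [/rank_mono //|/rank_mono|/f_inj ->].
  by move/ltnW; rewrite leqNgt => /negbTE.
exact: ltnn.
Qed.

Lemma rank_inj : injective rank.
Proof.
move=> i j eq_ij; apply: f_inj; apply/eqP; rewrite eq_le !leNgt.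
by rewrite -!ltn_rank eq_ij ltnn.
Qed.

End Rank.

Section SignedPermutations.
Variable n : nat.
Implicit Types sg rh : signed_perm n.

Lemma sval_inj sg : injective (Defs.sval sg).
Proof.
move=> i j; rewrite /Defs.sval.
have perm_eq : (sg.1 i : nat) = sg.1 j -> i = j by move/val_inj/perm_inj.
by case: (sg.2 i); case: (sg.2 j) => eq_ij; apply: perm_eq; lia.
Qed.

Lemma sval_natE sg k (lt_kn : k.-1 < n) : 0 < k -> sval_nat sg k = Defs.sval sg (Ordinal lt_kn).
Proof. by move=> k_gt0; rewrite /sval_nat (insubT (fun x => x < n) lt_kn) /= gtn_eqF. Qed.

Lemma eq_Peak sg rh :
  (forall i j, (Defs.sval sg i < Defs.sval sg j)%R = (Defs.sval rh i < Defs.sval rh j)%R) ->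
  Peak sg = Peak rh.
Proof.
move=> same_order; apply/setP => k; rewrite !inE /is_peak.
case: (leqP 2 k) => //= k_ge2; case: (leqP k n.-1) => //= k_le.
have lt1 : k.-1.-1 < n by lia.
have lt2 : k.-1 < n by lia.
have lt3 : k.+1.-1 < n by lia.
have k1_gt0 : 0 < k.-1 by lia.
rewrite !(sval_natE _ lt1 k1_gt0) !(sval_natE _ lt2 (ltnW k_ge2)) !(sval_natE _ lt3 (ltn0Sn k)).
by rewrite !same_order.
Qed.

Lemma dH_le sg rh : dH sg rh <= n.
Proof. by rewrite /dH (leq_trans (max_card _)) ?card_ord. Qed.

Lemma dH_full sg rh : (forall i, Defs.sval sg i != Defs.sval rh i) -> dH sg rh = n.
Proof.
move=> neq_all; rewrite /dH -[RHS](card_ord n) -cardsT.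
by apply: eq_card => i; rewrite !inE neq_all.
Qed.

Definition sneg sg : signed_perm n := (sg.1, [ffun i => ~~ sg.2 i]).

Lemma sval_sneg sg i : Defs.sval (sneg sg) i = (- Defs.sval sg i)%R.
Proof. by rewrite /Defs.sval ffunE; case: (sg.2 i); rewrite ?opprK. Qed.

Lemma rank_lt_n sg i : rank (Defs.sval sg) i < n.
Proof. by rewrite -[X in _ < X](card_ord n) rank_lt_card. Qed.

Lemma std_inj sg : injective (fun i => Ordinal (rank_lt_n sg i)).
Proof. by move=> i j /(congr1 val) /= /(rank_inj (@sval_inj sg)). Qed.

Definition std sg : signed_perm n := (perm (@std_inj sg), [ffun=> false]).

Lemma sval_std sg i : Defs.sval (std sg) i = Posz (rank (Defs.sval sg) i).+1.
Proof. by rewrite /Defs.sval ffunE permE. Qed.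

Lemma lt_sval_std sg i j :
  (Defs.sval (std sg) i < Defs.sval (std sg) j)%R = (Defs.sval sg i < Defs.sval sg j)%R.
Proof. by rewrite !sval_std ltz_nat ltnS ltn_rank //; apply: sval_inj. Qed.

(* Since n occurs with a minus sign, the entries >= a positive entry p+1 have
   absolute values in p+1..n-1, so at least p+1 entries lie strictly below it
   and its standardized value is at least p+2. *)
Lemma sval_std_neq sg i0 : Defs.sval sg i0 = (- Posz n)%R ->
  forall i, Defs.sval sg i != Defs.sval (std sg) i.
Proof.
rewrite {1}/Defs.sval => sg_i0 i; rewrite sval_std.
have [neg_i0 top_i0] : sg.2 i0 /\ (sg.1 i0).+1 = n.
  by case: (sg.2 i0) sg_i0 => E; split => //; lia.
rewrite {1}/Defs.sval; case si : (sg.2 i); first by apply/negP => /eqP; lia.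
pose G := [set j | (Defs.sval sg i <= Defs.sval sg j)%R].
have card_G : #|G| <= n.-1 - sg.1 i.
  apply: (card_le_range (h := fun j => nat_of_ord (sg.1 j))) => [j k _ _|j].
    by move/val_inj/perm_inj.
  rewrite inE /Defs.sval si; case sj : (sg.2 j); first lia.
  have j_ne_i0 : (sg.1 j : nat) != sg.1 i0.
    by apply: contraFneq sj => /val_inj /perm_inj ->.
  rewrite lez_nat; have := ltn_ord (sg.1 j); lia.
have := rank_complement (Defs.sval sg) i; rewrite card_ord -/G eqz_nat.
have := ltn_ord (sg.1 i); lia.
Qed.

Lemma exists_Peak_eq_dH_full sg : 0 < n -> exists2 rh, Peak rh = Peak sg & dH sg rh = n.
Proof.
move=> n_gt0; have top_lt : n.-1 < n by rewrite ltn_predL.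
pose i0 := (sg.1^-1)%g (Ordinal top_lt).
have [neg_top|pos_top] : Defs.sval sg i0 = (- Posz n)%R \/ Defs.sval sg i0 = Posz n.
  by rewrite /Defs.sval /i0 permKV /= prednK //; case: (sg.2 _); [left|right].
- exists (std sg); first by apply: eq_Peak => i j; rewrite lt_sval_std.
  exact/dH_full/(sval_std_neq neg_top).
- exists (sneg (std (sneg sg))).
    by apply: eq_Peak => i j; rewrite !sval_sneg ltrN2 lt_sval_std !sval_sneg ltrN2.
  apply: dH_full => i; rewrite sval_sneg -eqr_opp opprK -sval_sneg.
  by apply: (sval_std_neq (i0 := i0)); rewrite sval_sneg pos_top.
Qed.

End SignedPermutations.

Theorem theorem4p8 (n : nat) (S : {set 'I_n.+1}) :
  2 <= n -> admissible S ->
  \max_(pr in [set pr : signed_perm n * signed_perm n | (pr.1 \in PB S) && (pr.2 \in PB S)])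
      dH pr.1 pr.2 = n.
Proof.
move=> n_ge2 /set0Pn[sg]; rewrite inE => /eqP <-.
apply/eqP; rewrite eqn_leq; apply/andP; split.
  by apply/bigmax_leqP => pr _; apply: dH_le.
have [rh Peak_rh dH_sg_rh] := exists_Peak_eq_dH_full sg (ltnW n_ge2).
rewrite -[X in X <= _]dH_sg_rh (leq_bigmax_cond (sg, rh)) //.
by rewrite !inE /= Peak_rh eqxx.
Qed.
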